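(* Let $\mathfrak{g}$ be a non-abelian real Lie algebra of even dimension $2n\ge4$, equipped with an orientation. Then there exists an almost complex structure $J$ on $\mathfrak{g}$ which is not tamed by any symplectic form on $\mathfrak{g}$.
   Context: The Chevalley–Eilenberg differential on forms on $\mathfrak{g}$ is defined on 1-forms by $d\alpha(u,v)=-\alpha([u,v])$ and extended by the Leibniz rule; a symplectic form is a closed non-degenerate 2-form. An almost complex structure is a linear map $J:\mathfrak{g}\to\mathfrak{g}$ with $J^2=-1$; it is tamed by a symplectic form $\omega$ if $\omega(u,Ju)>0$ for all $u\ne0$. *)

(* The Lie algebra g is modelled as the coordinate space
   'rV[R]_m (m = dim g) with a Lie bracket; R is an arbitrary real field
   (the reals being the case of interest). *)
From HB Require Import structures.
From mathcomp Require Import all_boot all_order all_algebra.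
Set Implicit Arguments. Unset Strict Implicit. Unset Printing Implicit Defensive.
Import Order.TTheory GRing.Theory Num.Theory.
Local Open Scope ring_scope.

Section LieDefs.
Variables (R : realFieldType) (m : nat).
Local Notation V := 'rV[R]_m.

Definition bilinear_vmap (f : V -> V -> V) : Prop :=
  (forall (a : R) (u v w : V), f (a *: u + v) w = a *: f u w + f v w) /\
  (forall (a : R) (u v w : V), f u (a *: v + w) = a *: f u v + f u w).

Definition is_lie_bracket (br : V -> V -> V) : Prop :=
  [/\ bilinear_vmap br,
      (forall u : V, br u u = 0) &
      (forall u v w : V, br u (br v w) + br v (br w u) + br w (br u v) = 0)].

Definition non_abelian (br : V -> V -> V) : Prop :=
  exists u v : V, br u v != 0.

Definition is_2form (w : V -> V -> R) : Prop :=
  [/\ (forall (a : R) (u v x : V), w (a *: u + v) x = a * w u x + w v x),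
      (forall (a : R) (u v x : V), w u (a *: v + x) = a * w u v + w u x) &
      (forall u : V, w u u = 0)].

(* Chevalley-Eilenberg differential of a 2-form: obtained from
   d alpha (u,v) = - alpha([u,v]) on 1-forms by the Leibniz rule. *)
Definition ce_d2 (br : V -> V -> V) (w : V -> V -> R) (x y z : V) : R :=
  - w (br x y) z - w (br y z) x - w (br z x) y.

Definition ce_closed (br : V -> V -> V) (w : V -> V -> R) : Prop :=
  forall x y z : V, ce_d2 br w x y z = 0.

Definition nondegenerate (w : V -> V -> R) : Prop :=
  forall u : V, (forall v : V, w u v = 0) -> u = 0.

Definition symplectic (br : V -> V -> V) (w : V -> V -> R) : Prop :=
  [/\ is_2form w, ce_closed br w & nondegenerate w].

(* almost complex structure: linear J (acting on row vectors u |-> u *m J)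
   with J^2 = -1 *)
Definition almost_complex (J : 'M[R]_m) : Prop := J *m J = - 1%:M.

Definition tamed_by (J : 'M[R]_m) (w : V -> V -> R) : Prop :=
  forall u : V, u != 0 -> 0 < w u (u *m J).

End LieDefs.

From mathcomp Require Import all_boot all_order all_algebra.
From mathcomp Require Import zify ring lra.
Set Implicit Arguments. Unset Strict Implicit. Unset Printing Implicit Defensive.
Import Order.TTheory GRing.Theory Num.Theory.
Local Open Scope ring_scope.

(* A closed 2-form w vanishes on Chevalley-Eilenberg boundaries: on the
   bivector T = [x,y]^z + [y,z]^x + [z,x]^y it takes the value -2 dw(x,y,z) = 0.
   In a non-abelian Lie algebra of dimension at least 4 some such T is nonzero,
   since otherwise the structure constants are all forced to vanish.  A nonzero
   bivector has a normal form T = sum_k s_k ^ t_k with s_1..s_r, t_1..t_r linearly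
   independent, so there is a J with J^2 = -1 and s_k J = t_k.  Every w tamed by
   J then has w(T) = 2 sum_k w(s_k, s_k J) > 0, hence is not closed. *)

Section BilinearMap.
Variables (R : realFieldType) (m : nat) (M : lmodType R).
Local Notation V := 'rV[R]_m.
Variable f : V -> V -> M.
Hypothesis linear_l : forall a u v x, f (a *: u + v) x = a *: f u x + f v x.
Hypothesis linear_r : forall a u v x, f u (a *: v + x) = a *: f u v + f u x.

Lemma bilin0l x : f 0 x = 0.
Proof.
have := linear_l 1 0 0 x; rewrite !scale1r addr0 => h.
by apply: (@addrI _ (f 0 x)); rewrite -h addr0.
Qed.

Lemma bilin0r x : f x 0 = 0.
Proof.
have := linear_r 1 x 0 0; rewrite !scale1r addr0 => h.
by apply: (@addrI _ (f x 0)); rewrite -h addr0.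
Qed.

Lemma bilinDl u v x : f (u + v) x = f u x + f v x.
Proof. by rewrite -{1}(scale1r u) linear_l scale1r. Qed.

Lemma bilinDr u v x : f x (u + v) = f x u + f x v.
Proof. by rewrite -{1}(scale1r u) linear_r scale1r. Qed.

Lemma bilin_suml I (r : seq I) (P : pred I) (F : I -> V) x :
  f (\sum_(i <- r | P i) F i) x = \sum_(i <- r | P i) f (F i) x.
Proof.
exact: (big_morph (f^~ x) (fun u v => bilinDl u v x) (bilin0l x)).
Qed.

Lemma bilin_sumr I (r : seq I) (P : pred I) (F : I -> V) x :
  f x (\sum_(i <- r | P i) F i) = \sum_(i <- r | P i) f x (F i).
Proof.
exact: (big_morph (f x) (fun u v => bilinDr u v x) (bilin0r x)).
Qed.

Lemma bilinZl a u x : f (a *: u) x = a *: f u x.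
Proof. by rewrite -[a *: u]addr0 linear_l bilin0l addr0. Qed.

Lemma bilinZr a u x : f x (a *: u) = a *: f x u.
Proof. by rewrite -[a *: u]addr0 linear_r bilin0r addr0. Qed.

Lemma bilin_expand u v :
  f u v = \sum_i \sum_j (u 0 i * v 0 j) *: f 'e_i 'e_j.
Proof.
rewrite {1}(row_sum_delta u) bilin_suml; apply: eq_bigr => i _.
rewrite bilinZl {1}(row_sum_delta v) bilin_sumr scaler_sumr; apply: eq_bigr => j _.
by rewrite bilinZr scalerA.
Qed.

Lemma alternating_skew : (forall u, f u u = 0) -> forall u v, f v u = - f u v.
Proof.
move=> falt u v; apply/eqP; rewrite -addr_eq0 addrC.
by have := falt (u + v); rewrite bilinDl !bilinDr !falt add0r addr0 => ->.
Qed.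
End BilinearMap.

Section TwoForm.
Variables (R : realFieldType) (m : nat).
Local Notation V := 'rV[R]_m.
Variable w : V -> V -> R.
Hypothesis w2 : is_2form w.

Let w_linear_l : forall a u v x, w (a *: u + v) x = a *: (w u x : R^o) + w v x.
Proof. by case: w2. Qed.
Let w_linear_r : forall a u v x, w u (a *: v + x) = a *: (w u v : R^o) + w u x.
Proof. by case: w2. Qed.

Lemma form_expand u v : w u v = \sum_i \sum_j u 0 i * v 0 j * w 'e_i 'e_j.
Proof. exact: (@bilin_expand R m R^o w w_linear_l w_linear_r u v). Qed.

Lemma form0l x : w 0 x = 0.
Proof. exact: (@bilin0l R m R^o w w_linear_l). Qed.

Lemma form_skew u v : w v u = - w u v.
Proof. by apply: (@alternating_skew R m R^o w w_linear_l w_linear_r); case: w2. Qed.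
End TwoForm.

Section Pairing.
Variables (R : realFieldType) (m : nat).
Local Notation V := 'rV[R]_m.

(* Bivectors are skew matrices: [wedge S T] is sum_k (row k S) ^ (row k T), and
   [pairing w A] evaluates the 2-form w on the bivector A. *)
Definition wedge r (S T : 'M[R]_(r, m)) : 'M[R]_m := S^T *m T - T^T *m S.

Definition pairing (w : V -> V -> R) (A : 'M[R]_m) : R :=
  \sum_i \sum_j A i j * w 'e_i 'e_j.

Lemma wedge_tr r (S T : 'M[R]_(r, m)) : (wedge S T)^T = - wedge S T.
Proof. by rewrite /wedge linearB /= !trmx_mul !trmxK opprB. Qed.

Lemma wedge_col_mx r (s t : V) (S T : 'M[R]_(r, m)) :
  wedge (col_mx s S) (col_mx t T) = wedge s t + wedge S T.
Proof. by rewrite /wedge !tr_col_mx !mul_row_col opprD addrACA. Qed.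

Lemma wedge_rowE (u v : V) p q : wedge u v p q = u 0 p * v 0 q - v 0 p * u 0 q.
Proof. by rewrite !mxE !big_ord1 !mxE. Qed.

Variable w : V -> V -> R.

Lemma pairingD A B : pairing w (A + B) = pairing w A + pairing w B.
Proof.
rewrite /pairing -big_split; apply: eq_bigr => i _.
by rewrite -big_split; apply: eq_bigr => j _; rewrite mxE mulrDl.
Qed.

Lemma pairingN A : pairing w (- A) = - pairing w A.
Proof.
rewrite /pairing -sumrN; apply: eq_bigr => i _.
by rewrite -sumrN; apply: eq_bigr => j _; rewrite mxE mulNr.
Qed.

Hypothesis w2 : is_2form w.

Lemma pairing_mul_tr r (S T : 'M[R]_(r, m)) :
  pairing w (S^T *m T) = \sum_k w (row k S) (row k T).
Proof.
under [RHS]eq_bigr do rewrite form_expand //.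
rewrite exchange_big; apply: eq_bigr => i _.
rewrite exchange_big; apply: eq_bigr => j _.
by rewrite !mxE big_distrl; apply: eq_bigr => k _; rewrite !mxE.
Qed.

Lemma pairing_wedge r (S T : 'M[R]_(r, m)) :
  pairing w (wedge S T) = 2 * \sum_k w (row k S) (row k T).
Proof.
rewrite pairingD pairingN !pairing_mul_tr mulr_sumr -sumrB.
by apply: eq_bigr => k _; rewrite (form_skew w2); ring.
Qed.

Lemma pairing_wedge_row (s t : V) : pairing w (wedge s t) = 2 * w s t.
Proof. by rewrite pairing_wedge big_ord1 !row_id. Qed.
End Pairing.

Lemma ord_avoid3 m (i j k : 'I_m) : (3 < m)%N ->
  exists l : 'I_m, [&& l != i, l != j & l != k].
Proof.
move=> hm; have : (0 < #|[predC mem [:: i; j; k]]|)%N.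
  have := cardC (mem [:: i; j; k]); rewrite card_ord.
  have : (#|mem [:: i; j; k]| <= 3)%N := card_size _.
  by set X := #|mem _|; set Y := #|_|; lia.
case/card_gt0P => l; rewrite !inE => /norP[li /norP[lj lk]].
by exists l; rewrite li lj lk.
Qed.

Section LieBracket.
Variables (R : realFieldType) (m : nat).
Local Notation V := 'rV[R]_m.
Variable br : V -> V -> V.

Definition ce_boundary x y z : 'M[R]_m :=
  wedge (br x y) z + wedge (br y z) x + wedge (br z x) y.

Lemma ce_boundary_skew x y z : (ce_boundary x y z)^T = - ce_boundary x y z.
Proof. by rewrite /ce_boundary 2!linearD /= !wedge_tr !opprD. Qed.

Lemma pairing_ce_boundary w x y z : is_2form w ->
  pairing w (ce_boundary x y z) = - 2 * ce_d2 br w x y z.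
Proof. by move=> w2; rewrite 2!pairingD !pairing_wedge_row // /ce_d2; ring. Qed.

Lemma ce_boundary_basis_entry a b c p q :
  ce_boundary 'e_a 'e_b 'e_c p q =
    br 'e_a 'e_b 0 p * (q == c)%:R - (p == c)%:R * br 'e_a 'e_b 0 q
  + (br 'e_b 'e_c 0 p * (q == a)%:R - (p == a)%:R * br 'e_b 'e_c 0 q)
  + (br 'e_c 'e_a 0 p * (q == b)%:R - (p == b)%:R * br 'e_c 'e_a 0 q).
Proof. by rewrite /ce_boundary [LHS]mxE [X in X + _]mxE !wedge_rowE !mxE. Qed.

Hypothesis hbr : is_lie_bracket br.

Let br_linear_l : forall a u v x, br (a *: u + v) x = a *: br u x + br v x.
Proof. by case: hbr => -[]. Qed.
Let br_linear_r : forall a u v x, br u (a *: v + x) = a *: br u v + br u x.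
Proof. by case: hbr => -[]. Qed.

Lemma lie_skew u v : br v u = - br u v.
Proof. by apply: alternating_skew; case: hbr. Qed.

Lemma lie_eq0_on_basis : (forall i j, br 'e_i 'e_j = 0) -> forall u v, br u v = 0.
Proof.
move=> h0 u v; rewrite (bilin_expand br_linear_l br_linear_r).
by rewrite big1 // => i _; rewrite big1 // => j _; rewrite h0 scaler0.
Qed.

Lemma ce_boundary_basis0_abelian : (3 < m)%N ->
  (forall a b c, ce_boundary 'e_a 'e_b 'e_c = 0) -> forall u v, br u v = 0.
Proof.
move=> hm h0; apply: lie_eq0_on_basis => i j; apply/rowP => q; rewrite mxE.
(* With k the structure constants, entry (p, c) of the boundary of a basis
   triple (a, b, c) with c \notin {a, b, p} yields [k_expand]; applied to three
   pairwise distinct c, d, e other than b it forces k b c c = 0. *)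
pose k a b p := br 'e_a 'e_b 0 p.
have kC a b p : k b a p = - k a b p by rewrite /k lie_skew mxE.
have k_expand a b p c : c != a -> c != b -> c != p ->
    k a b p = (a == p)%:R * k b c c + (b == p)%:R * k c a c.
  move=> ca cb cp; have := congr1 (fun A : 'M[R]_m => A p c) (h0 a b c).
  rewrite ce_boundary_basis_entry eqxx (negbTE ca) (negbTE cb) (eq_sym p c) (negbTE cp).
  rewrite (eq_sym p a) (eq_sym p b) mxE /k /= mulr1n !mulr0n; lra.
have k_trace b c : c != b -> k b c c = 0.
  have k_shift c' d : c' != b -> d != b -> d != c' -> k b c' c' = - k b d d.
    move=> cb db dc; rewrite (k_expand b c' c' d) // (eq_sym b c') (negbTE cb) eqxx.
    by rewrite (kC b d d) /= mulr1n mulr0n mul0r add0r mul1r.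
  move=> cb; have [d /and3P[db dc _]] := ord_avoid3 b c c hm.
  have [e /and3P[eb ec ed]] := ord_avoid3 b c d hm.
  have := k_shift c d cb db dc; have := k_shift d e db eb ed; have := k_shift c e cb eb ec.
  lra.
have [l /and3P[li lj lq]] := ord_avoid3 i j q hm.
by rewrite -/(k i j q) (k_expand i j q l) // (kC i l l) !k_trace // oppr0 !mulr0 addr0.
Qed.
End LieBracket.

Lemma ce_boundary_neq0 (R : realFieldType) m (br : 'rV[R]_m -> 'rV[R]_m -> 'rV[R]_m) :
  is_lie_bracket br -> non_abelian br -> (3 < m)%N ->
  exists x y z, ce_boundary br x y z != 0.
Proof.
move=> hbr [u [v huv]] hm.
case: (boolP [exists a, exists b, exists c, ce_boundary br 'e_a 'e_b 'e_c != 0]).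
  by case/existsP => a /existsP[b /existsP[c h]]; exists 'e_a, 'e_b, 'e_c.
move=> /existsPn h0; suff h0' a b c : ce_boundary br 'e_a 'e_b 'e_c = 0.
  by rewrite (ce_boundary_basis0_abelian hbr hm h0') eqxx in huv.
by apply/eqP; move: (h0 a) => /existsPn /(_ b) /existsPn /(_ c) /negPn.
Qed.

Section SkewNormalForm.
Variables (R : realFieldType) (m : nat).
Local Notation V := 'rV[R]_m.

Lemma row_free_col_mx_dual r (S T : 'M[R]_(r, m)) :
  row_free (col_mx S T) <->
  exists U V : 'M_(m, r), [/\ S *m U = 1%:M, S *m V = 0, T *m U = 0 & T *m V = 1%:M].
Proof.
split=> [/row_freeP[B hB] | [U [V [SU SV TU TV]]]].
  exists (lsubmx B), (rsubmx B).
  move: hB; rewrite -[B in _ *m B]hsubmxK mul_col_row (scalar_mx_block r r 1).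
  by move/eq_block_mx.
by apply/row_freeP; exists (row_mx U V); rewrite mul_col_row SU SV TU TV -scalar_mx_block.
Qed.

Lemma row_free_cons r (S T : 'M[R]_(r, m)) (s t : V) (p q : 'cV[R]_m) :
  row_free (col_mx S T) ->
  col_mx s t *m row_mx p q = 1%:M -> col_mx S T *m row_mx p q = 0 ->
  row_free (col_mx (col_mx s S) (col_mx t T)).
Proof.
move=> /row_free_col_mx_dual[U [V [SU SV TU TV]]].
rewrite mul_col_row (scalar_mx_block 1 1 1) => /eq_block_mx[sp sq tp tq].
move/eqP; rewrite mul_col_row block_mx_eq0 => /and4P[/eqP Sp /eqP Sq /eqP Tp /eqP Tq].
pose proj (X : 'M[R]_(m, r)) := X - p *m (s *m X) - q *m (t *m X).
have projE k (X : 'M_(k, m)) (Y : 'M_(m, r)) :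
    X *m proj Y = X *m Y - (X *m p) *m (s *m Y) - (X *m q) *m (t *m Y).
  by rewrite !mulmxBr !mulmxA.
apply/row_free_col_mx_dual; exists (row_mx p (proj U)), (row_mx q (proj V)).
rewrite !mul_col_row !projE sp sq tp tq Sp Sq Tp Tq SU SV TU TV !mul1mx !mul0mx.
by rewrite !subr0 !subrr -!scalar_mx_block block_mx0.
Qed.

Lemma rowv_mul_delta (u : V) j : u *m delta_mx j 0 = (u 0 j)%:M.
Proof. by rewrite -colE [LHS]mx11_scalar mxE. Qed.

Lemma skew_split (A : 'M[R]_m) : A^T = - A -> A != 0 ->
  exists (s t : V) (p q : 'cV[R]_m),
  [/\ col_mx s t *m row_mx p q = 1%:M, (col_mx s t <= A)%MS,
      (A - wedge s t < A)%MS & (A - wedge s t) *m row_mx p q = 0].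
Proof.
move=> skA /matrix0Pn[i [j Aij]].
have skE a b : A b a = - A a b.
  by have := congr1 (fun M : 'M[R]_m => M a b) skA; rewrite !mxE.
have Aii : A i i = 0 by have := skE i i; lra.
have Ajj : A j j = 0 by have := skE j j; lra.
(* Subtracting wedge s t clears rows and columns i and j of A. *)
set lam := A i j in Aij.
pose s := lam^-1 *: row i A; pose t := row j A.
pose p : 'cV[R]_m := delta_mx j 0; pose q : 'cV[R]_m := - lam^-1 *: delta_mx i 0.
set A' := A - wedge s t.
have A'E a b : A' a b = A a b - (lam^-1 * A i a * A j b - A j a * (lam^-1 * A i b)).
  by rewrite /A' [LHS]mxE [X in _ + X]mxE wedge_rowE !mxE.
have A'j : A' *m p = 0.
  rewrite /p -colE; apply/colP => a.
  by rewrite [LHS]mxE A'E (skE j a) Ajj !mxE -/lam; field.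
have A'i : A' *m (delta_mx i 0 : 'cV[R]_m) = 0.
  rewrite -colE; apply/colP => a.
  by rewrite [LHS]mxE A'E (skE i a) (skE i j) Aii !mxE -/lam; field.
have sA : (s <= A)%MS by rewrite scalemx_sub ?row_sub.
have tA : (t <= A)%MS := row_sub j A.
have wA : (wedge s t <= A)%MS.
  rewrite addmx_sub ?(submx_trans (submxMl _ _)) // -scaleN1r scalemx_sub //.
  exact: submx_trans (submxMl _ _) sA.
exists s, t, p, q; rewrite -/A'; split.
- rewrite mul_col_row (scalar_mx_block 1 1 1) /s /q -!scalemxAl -!scalemxAr !rowv_mul_delta.
  by rewrite !scale_scalar_mx !mxE Aii Ajj (skE i j) -/lam mulrNN mulVf // !mulr0 raddf0.
- by rewrite col_mx_sub sA tA.
- rewrite ltmxE addmx_sub // -?scaleN1r ?scalemx_sub //=.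
  apply/negP => /submxP[X defA].
  have : (A *m p) i 0 = 0 by rewrite defA -mulmxA A'j mulmx0 mxE.
  by rewrite /p -colE mxE; apply/eqP.
- by rewrite mul_mx_row A'j -scalemxAr A'i scaler0 row_mx0.
Qed.

Lemma skew_normal_form (A : 'M[R]_m) : A^T = - A ->
  exists r (S T : 'M[R]_(r, m)),
    [/\ A = wedge S T, (col_mx S T <= A)%MS & row_free (col_mx S T)].
Proof.
have [N] := ubnP (\rank A); elim: N A => // N IH A ltAN skA.
have [-> | nzA] := eqVneq A 0.
  exists 0%N, 0, 0; split; first by rewrite /wedge !mulmx0 subr0.
    by rewrite col_mx0 sub0mx.
  by rewrite /row_free col_mx0 mxrank0.
have [s [t [p [q [stpq stA ltA kerA]]]]] := skew_split skA nzA.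
have skA' : (A - wedge s t)^T = - (A - wedge s t).
  by rewrite linearB /= wedge_tr skA opprK opprB addrC.
have [|r [S [T [defA' STA' freeST]]]] := IH _ _ skA'.
  by have := rank_ltmx ltA; lia.
exists r.+1, (col_mx s S), (col_mx t T); split.
- by rewrite wedge_col_mx -defA' addrC subrK.
- move: stA STA'; rewrite !col_mx_sub => /andP[sA tA] /andP[SA TA].
  by rewrite (col_mx_sub s) (col_mx_sub t) sA tA !(submx_trans _ (ltmxW ltA)).
- apply: row_free_cons freeST stpq _.
  by have [X ->] := submxP STA'; rewrite -mulmxA kerA mulmx0.
Qed.
End SkewNormalForm.

Section ComplexStructure.
Variables (R : realFieldType) (k : nat).

Definition std_complex_mx : 'M[R]_(k + k) := block_mx 0 1%:M (- 1%:M) 0.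

Lemma std_complex_mx_sqr : std_complex_mx *m std_complex_mx = - 1%:M.
Proof.
rewrite /std_complex_mx mulmx_block !mulmx0 !mul0mx !mul1mx !mulmx1 !addr0 !add0r.
by rewrite (scalar_mx_block k k 1) opp_block_mx oppr0.
Qed.

Lemma row_free_complex_structure r (S T : 'M[R]_(r, k + k)) :
  row_free (col_mx S T) -> exists J : 'M[R]_(k + k), J *m J = - 1%:M /\ S *m J = T.
Proof.
(* Pad S and T to k rows, complete the padded frame to an invertible g, and
   conjugate the standard complex structure by g. *)
move=> free; have [B hB] := row_freeP free.
have rk : (r <= k)%N by have := rank_leq_col (col_mx S T); rewrite (eqP free); lia.
pose I : 'M[R]_(k, r) := pid_mx r.
have I'I : (pid_mx r : 'M[R]_(r, k)) *m I = 1%:M.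
  by rewrite mul_pid_mx !minnn (minn_idPr rk) pid_mx_1.
pose E : 'M[R]_(k + k, r + r) := block_mx I 0 0 I.
have EtE : E^T *m E = 1%:M.
  rewrite tr_block_mx !trmx0 tr_pid_mx mulmx_block !mulmx0 !mul0mx !addr0 !add0r I'I.
  by rewrite -scalar_mx_block.
pose F := E *m col_mx S T; pose D := E *m E^T.
have DF : D *m F = F by rewrite -mulmxA (mulmxA E^T) EtE mul1mx.
have FBE : F *m (B *m E^T) = D by rewrite -mulmxA (mulmxA (col_mx S T)) hB mul1mx.
have [g g_unit Dg] : {g | g \in unitmx & D *m F = D *m g}.
  apply: complete_unitmx; apply/eqP; rewrite DF eqn_leq; apply/andP; split.
    by rewrite -{1}DF mxrankM_maxl.
  by rewrite -{1}FBE mxrankM_maxl.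
rewrite DF in Dg.
pose J0 := std_complex_mx.
have DJ0 : D *m J0 = J0 *m D.
  rewrite /D /J0 /std_complex_mx tr_block_mx !trmx0 !mulmx_block !mulmx0 !mul0mx.
  by rewrite !mulmxN !mulNmx !mulmx1 !mul1mx !addr0 !add0r oppr0.
clearbody D.
exists (invmx g *m J0 *m g); split.
  rewrite -!mulmxA (mulmxA g) mulmxV // mul1mx (mulmxA J0) std_complex_mx_sqr.
  by rewrite mulNmx mul1mx mulmxN mulVmx.
have FJ : F *m (invmx g *m J0 *m g) = J0 *m F.
  by rewrite Dg -!mulmxA (mulmxA g) mulmxV // mul1mx !mulmxA DJ0.
move: FJ; rewrite /F /J0 /std_complex_mx -mulmxA (mul_col_mx S) !mul_block_col.
rewrite !mul0mx !mul1mx !mulNmx !mul1mx !addr0 !add0r => /eq_col_mx[ISJ _].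
by have := congr1 (mulmx (pid_mx r : 'M_(r, k))) ISJ; rewrite !mulmxA I'I !mul1mx.
Qed.
End ComplexStructure.

Lemma tamed_pairing_wedge_gt0 (R : realFieldType) m (w : 'rV[R]_m -> 'rV[R]_m -> R)
    (J : 'M[R]_m) r (S : 'M[R]_(r, m)) :
  is_2form w -> tamed_by J w -> S != 0 -> 0 < pairing w (wedge S (S *m J)).
Proof.
move=> w2 tamed nzS; rewrite pairing_wedge // pmulr_rgt0 //.
have tamed_ge0 u : 0 <= w u (u *m J).
  by have [->|/tamed/ltW //] := eqVneq u 0; rewrite form0l.
have [k nzSk] : exists k, row k S != 0.
  apply/existsP; apply: contraNT nzS => /existsPn Srow0.
  by apply/eqP/row_matrixP => k; rewrite row0; apply/eqP/negPn.
rewrite (bigD1 k) //= row_mul ltr_pwDl ?tamed //.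
by apply: sumr_ge0 => j _; rewrite row_mul; apply: tamed_ge0.
Qed.

Theorem proposition4 (R : realFieldType) (n : nat) (hn : (2 <= n)%N)
  (br : 'rV[R]_(n.*2) -> 'rV[R]_(n.*2) -> 'rV[R]_(n.*2))
  (hbr : is_lie_bracket br) (hna : non_abelian br) :
  exists J : 'M[R]_(n.*2),
    almost_complex J /\
    (forall w : 'rV[R]_(n.*2) -> 'rV[R]_(n.*2) -> R,
        symplectic br w -> ~ tamed_by J w).
Proof.
move: br hbr hna; rewrite -addnn => br hbr hna.
have [x [y [z nzA]]] : exists x y z, ce_boundary br x y z != 0.
  by apply: ce_boundary_neq0 => //; lia.
have [r [S [T [defA _ free]]]] := skew_normal_form (ce_boundary_skew br x y z).
have [J [J2 SJ]] := row_free_complex_structure free.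
exists J; split => // w [w2 closed _] tamed.
have nzS : S != 0.
  by apply: contraNneq nzA => S0; rewrite defA -SJ S0 mul0mx /wedge trmx0 !mul0mx subrr.
have := tamed_pairing_wedge_gt0 w2 tamed nzS.
by rewrite SJ -defA pairing_ce_boundary // closed mulr0 ltxx.
Qed.
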